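(* If $\gamma\in N(x_v^{-1})$, then $v^{-1}(\gamma) \in \Phi^- \setminus \Delta^-$.
   Context: Let $G$ be a complex linear reductive algebraic group with Borel subgroup $B$, maximal torus $T\subset B$, Weyl group $W$, root system $\Phi$ with positive roots $\Phi^+$, negative roots $\Phi^-$, simple roots $\Delta$, and negative simple roots $\Delta^-=-\Delta$. For $w\in W$ let $N(w)=\{\gamma\in\Phi^+ : w(\gamma)\in\Phi^-\}$ be its inversion set. Let $S\in\mathfrak{h}$ (the Lie algebra of $T$) be a non-regular semisimple element and $M=Z_G(S)$, assumed to be a standard Levi subgroup with positive roots $\Phi_M^+$, and let ${^M W}=\{v\in W : N(v^{-1})\subseteq \Phi^+\setminus\Phi_M^+\}$. Fix $v\in {^M W}$, let $R(v)=N(v)\cap\Delta$, and let $L=L_v$ be the standard Levi subgroup with simple roots $\Delta_L=R(v)$, Weyl group $W_L$, positive roots $\Phi_L^+$ and negative roots $\Phi_L^-$. Let $w_v$ be the longest element of $W_L$ and write $v=x_vw_v$ with $x_v\in W^L=\{w\in W : N(w)\subseteq\Phi^+\setminus\Phi_L^+\}$ and $\ell(v)=\ell(x_v)+\ell(w_v)$ (this decomposition exists and is unique). *)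

(* Combinatorial model of the root system / Weyl group of a
   complex reductive group G with maximal torus T: roots are column vectors in
   V = X^*(T) (x) R = R^n, equipped with a W-invariant inner product, taken
   to be the standard dot product.  Weyl group elements act on the left as
   matrices: w(gamma) = w *m gamma. *)
From HB Require Import structures.
From mathcomp Require Import all_boot all_order all_algebra.
Set Implicit Arguments. Unset Strict Implicit. Unset Printing Implicit Defensive.
Import Order.TTheory GRing.Theory Num.Theory.
Local Open Scope ring_scope.

Section RootSystems.
Variables (R : realFieldType) (n : nat).
Local Notation vec := 'cV[R]_n.

Definition dot (x y : vec) : R := (x^T *m y) 0 0.

Definition refl_mx (a : vec) : 'M[R]_n := 1%:M - (2 / dot a a) *: (a *m a^T).

Definition refl_prod (s : seq vec) : 'M[R]_n :=
  foldr (fun a m => refl_mx a *m m) 1%:M s.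

Definition root_system (Phi : seq vec) : Prop :=
  [/\ 0 \notin Phi,
      forall a b, a \in Phi -> b \in Phi -> refl_mx a *m b \in Phi,
      forall a b, a \in Phi -> b \in Phi ->
        exists k : int, 2 * dot b a / dot a a = k%:~R
    & forall a (c : R), a \in Phi -> c *: a \in Phi -> c = 1 \/ c = -1].

Definition pos_wrt (Phi S : seq vec) (b : vec) : Prop :=
  b \in Phi /\ exists c : vec -> nat, b = \sum_(d <- S) (c d)%:R *: d.

Definition simple_roots (Phi Delta : seq vec) : Prop :=
  [/\ uniq Delta, {subset Delta <= Phi},
      (forall c : vec -> R, \sum_(d <- Delta) c d *: d = 0 ->
         forall d, d \in Delta -> c d = 0)
    & forall b, b \in Phi -> pos_wrt Phi Delta b \/ pos_wrt Phi Delta (- b)].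

Definition in_W (Phi : seq vec) (w : 'M[R]_n) : Prop :=
  exists s : seq vec, all (mem Phi) s /\ w = refl_prod s.

Definition in_W_gen (S : seq vec) (w : 'M[R]_n) : Prop :=
  exists s : seq vec, all (mem S) s /\ w = refl_prod s.

Definition has_word (Delta : seq vec) (w : 'M[R]_n) (k : nat) : Prop :=
  exists s : seq vec, [/\ size s = k, all (mem Delta) s & w = refl_prod s].
Definition length_is (Delta : seq vec) (w : 'M[R]_n) (k : nat) : Prop :=
  has_word Delta w k /\ forall j, (j < k)%N -> ~ has_word Delta w j.

Definition pos_root (Phi Delta : seq vec) (b : vec) := pos_wrt Phi Delta b.
Definition neg_root (Phi Delta : seq vec) (b : vec) := pos_wrt Phi Delta (- b).
Definition in_N (Phi Delta : seq vec) (w : 'M[R]_n) (g : vec) : Prop :=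
  pos_root Phi Delta g /\ neg_root Phi Delta (w *m g).

(* S in h, given by its real and imaginary parts s1, s2 (linear forms on V):
   alpha(S) = s1 alpha + i s2 alpha *)
Definition vanishes_at (s1 s2 : 'rV[R]_n) (a : vec) : Prop :=
  s1 *m a = 0 /\ s2 *m a = 0.

End RootSystems.

(** Put [beta := - x_v^-1 gamma], a positive root with [x_v beta < 0].  First,
    [beta] is not in the span of [Delta_L], for then [w_v^-1 beta] is a root of
    [L].  If it is positive, [beta = w_v (w_v^-1 beta)] is negative, because the
    longest element [w_v] of [W_L] sends positive roots of [L] to negative ones.
    If it is negative, then [s_beta w_v = w_v s_delta] with
    [delta = - w_v^-1 beta], and the exchange condition shortens reduced words of
    both [x_v s_beta] and [w_v s_delta], so that [v = (x_v s_beta) (w_v s_delta)]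
    has length [< l(x_v) + l(w_v)].
    Reflections in simple roots of [L] permute the positive roots outside the
    span of [Delta_L], hence [w_v^-1 beta = - v^-1 gamma] is such a root.  It is
    not simple either, for [v (w_v^-1 beta) = x_v beta = - gamma < 0] would put it
    in [N(v) \cap Delta = Delta_L]. *)
From HB Require Import structures.
From mathcomp Require Import all_boot all_order all_algebra.
From Stdlib Require Import Classical.
Import Order.TTheory GRing.Theory Num.Theory.
Local Open Scope ring_scope.
Set Implicit Arguments. Unset Strict Implicit.

Section Reflections.
Variables (R : realFieldType) (n : nat).
Implicit Types (a x y : 'cV[R]_n) (u : 'M[R]_n) (s : seq 'cV[R]_n).

Lemma dotE x y : dot x y = \sum_i x i 0 * y i 0.
Proof. by rewrite /dot mxE; apply: eq_bigr => i _; rewrite mxE. Qed.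

Lemma dotNN x y : dot (- x) (- y) = dot x y.
Proof. by rewrite !dotE; apply: eq_bigr => i _; rewrite !mxE mulrNN. Qed.

Lemma dotxx_eq0 x : dot x x = 0 -> x = 0.
Proof.
rewrite dotE => hx; apply/matrixP => i j; rewrite (ord1 j) mxE.
have hsq k : predT k -> 0 <= x k 0 * x k 0 by rewrite -expr2 sqr_ge0.
have /eqP := @psumr_eq0P _ _ predT (fun k => x k 0 * x k 0) hsq hx i isT.
by rewrite mulf_eq0 orbb => /eqP.
Qed.

Lemma dot_orthogonal u x y : u^T *m u = 1%:M -> dot (u *m x) (u *m y) = dot x y.
Proof. by move=> hu; rewrite /dot trmx_mul mulmxA -(mulmxA x^T) hu mulmx1. Qed.

Lemma invmx_orthogonal u : u^T *m u = 1%:M -> invmx u = u^T.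
Proof.
move=> hu; have hu' : u *m u^T = 1%:M by apply: mulmx1C.
have hU : u \in unitmx by case: (mulmx1_unit hu').
by rewrite -[invmx u]mulmx1 -hu' mulmxA mulVmx // mul1mx.
Qed.

Lemma refl_mxE a x : refl_mx a *m x = x - (2 / dot a a * dot a x) *: a.
Proof.
rewrite /refl_mx mulmxBl mul1mx -scalemxAl -mulmxA.
by rewrite [a^T *m x]mx11_scalar mul_mx_scalar scalerA.
Qed.

Lemma tr_refl_mx a : (refl_mx a)^T = refl_mx a.
Proof. by rewrite /refl_mx linearB /= trmx1 linearZ /= trmx_mul trmxK. Qed.

Lemma refl_mxN a : refl_mx (- a) = refl_mx a.
Proof. by rewrite /refl_mx dotNN linearN /= mulNmx mulmxN opprK. Qed.

Lemma refl_mx_self a : dot a a != 0 -> refl_mx a *m a = - a.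
Proof.
by move=> ha; rewrite refl_mxE mulfVK // scaler_nat mulr2n opprD addrA subrr sub0r.
Qed.

Lemma refl_mxK a : dot a a != 0 -> refl_mx a *m refl_mx a = 1%:M.
Proof.
move=> ha; rewrite {2}/refl_mx mulmxBr mulmx1 -scalemxAr mulmxA refl_mx_self //.
by rewrite mulNmx scalerN opprK subrK.
Qed.

Lemma refl_mx_conj u a :
  u^T *m u = 1%:M -> refl_mx (u *m a) = u *m refl_mx a *m u^T.
Proof.
move=> hu; have hu' : u *m u^T = 1%:M by apply: mulmx1C.
rewrite /refl_mx dot_orthogonal // mulmxBr mulmx1 mulmxBl hu'.
by rewrite -scalemxAr -scalemxAl trmx_mul !mulmxA.
Qed.

Lemma refl_prod_cat s1 s2 : refl_prod (s1 ++ s2) = refl_prod s1 *m refl_prod s2.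
Proof. by elim: s1 => [|a s1 IH] /=; rewrite ?mul1mx // IH mulmxA. Qed.

Lemma refl_prod_rcons s a : refl_prod (rcons s a) = refl_prod s *m refl_mx a.
Proof. by rewrite -cats1 refl_prod_cat /= mulmx1. Qed.

Lemma tr_refl_prod s : (refl_prod s)^T = refl_prod (rev s).
Proof.
elim: s => [|a s IH] /=; first by rewrite trmx1.
by rewrite trmx_mul IH tr_refl_mx rev_cons refl_prod_rcons.
Qed.

Lemma refl_prod_orthogonal s :
  (forall a, a \in s -> dot a a != 0) -> (refl_prod s)^T *m refl_prod s = 1%:M.
Proof.
elim: s => [|a s IH] /= hs; first by rewrite trmx1 mulmx1.
rewrite trmx_mul tr_refl_mx -mulmxA (mulmxA (refl_mx a)) refl_mxK ?hs ?mem_head //.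
by rewrite mul1mx IH // => b hb; apply: hs; rewrite inE hb orbT.
Qed.

Lemma has_word_length (D : seq 'cV[R]_n) u m :
  has_word D u m -> exists k, length_is D u k.
Proof.
elim: m {-2}m (leqnn m) => [|N IH] m hm hw.
  by exists m; split => // j hj; move: (leq_trans hj hm).
case: (classic (exists2 j, (j < m)%N & has_word D u j)) => [[j hj hwj]|hno].
  by apply: (IH j) => //; rewrite -ltnS (leq_trans hj hm).
by exists m; split => // j hj hwj; apply: hno; exists j.
Qed.

Definition lincomb (D : seq 'cV[R]_n) (f : 'cV[R]_n -> R) : 'cV[R]_n :=
  \sum_(d <- D) f d *: d.

Definition cone (D : seq 'cV[R]_n) (x : 'cV[R]_n) : Prop :=
  exists2 f, x = lincomb D f & forall d, d \in D -> 0 <= f d.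

Definition spanned_by (D DL : seq 'cV[R]_n) (x : 'cV[R]_n) : Prop :=
  exists2 f, x = lincomb D f & forall d, d \in D -> d \notin DL -> f d = 0.

Lemma lincombD D f g : lincomb D (fun d => f d + g d) = lincomb D f + lincomb D g.
Proof. by rewrite /lincomb -big_split; apply: eq_bigr => d _; rewrite scalerDl. Qed.

Lemma lincombZ D c f : lincomb D (fun d => c * f d) = c *: lincomb D f.
Proof. by rewrite /lincomb scaler_sumr; apply: eq_bigr => d _; rewrite scalerA. Qed.

Lemma lincombN D f : lincomb D (fun d => - f d) = - lincomb D f.
Proof. by rewrite /lincomb -sumrN; apply: eq_bigr => d _; rewrite scaleNr. Qed.

Lemma eq_lincomb D f g : (forall d, d \in D -> f d = g d) -> lincomb D f = lincomb D g.
Proof. by move=> hfg; apply: eq_big_seq => d hd; rewrite hfg. Qed.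

Lemma lincomb_eq0 D f : (forall d, d \in D -> f d = 0) -> lincomb D f = 0.
Proof. by move=> hf; rewrite /lincomb big1_seq // => d /andP[_ hd]; rewrite hf ?scale0r. Qed.

Lemma lincomb_delta D a : uniq D -> a \in D -> lincomb D (fun d => (d == a)%:R) = a.
Proof.
move=> hD ha; rewrite /lincomb (bigD1_seq a) //= eqxx scale1r big1 ?addr0 //.
by move=> d /negPf ->; rewrite scale0r.
Qed.

Lemma cone0 D : cone D 0.
Proof. by exists (fun _ => 0) => //; rewrite lincomb_eq0. Qed.

Lemma coneD D x y : cone D x -> cone D y -> cone D (x + y).
Proof.
move=> [f -> hf] [g -> hg]; exists (fun d => f d + g d); first by rewrite lincombD.
by move=> d hd; rewrite addr_ge0 ?hf ?hg.
Qed.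

Lemma coneZ D c x : 0 <= c -> cone D x -> cone D (c *: x).
Proof.
move=> hc [f -> hf]; exists (fun d => c * f d); first by rewrite lincombZ.
by move=> d hd; rewrite mulr_ge0 ?hf.
Qed.

Lemma spanned_by_mem D DL a :
  uniq D -> {subset DL <= D} -> a \in DL -> spanned_by D DL a.
Proof.
move=> hD hDL ha; exists (fun d => (d == a)%:R); first by rewrite lincomb_delta ?hDL.
by move=> d _ hdL; case: eqVneq => // hda; move: hdL; rewrite hda ha.
Qed.

Lemma spanned_by_refl D DL a x :
  uniq D -> {subset DL <= D} -> a \in DL ->
  spanned_by D DL x -> spanned_by D DL (refl_mx a *m x).
Proof.
move=> hD hDL ha [f hx hf]; set k := 2 / dot a a * dot a x.
exists (fun d => f d + - (k * (d == a)%:R)).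
  by rewrite lincombD lincombN lincombZ lincomb_delta ?hDL // -hx refl_mxE.
move=> d hd hdL; rewrite hf //; have /negPf -> : d != a by apply: contraNneq hdL => ->.
by rewrite mulr0 oppr0 addr0.
Qed.

Lemma spanned_by_W_gen D DL u x :
  uniq D -> {subset DL <= D} -> in_W_gen DL u ->
  spanned_by D DL x -> spanned_by D DL (u *m x).
Proof.
move=> hD hDL [s [+ ->]]; elim: s => [|a s IH] /=; first by rewrite mul1mx.
by case/andP => ha hs hx; rewrite -mulmxA; apply: spanned_by_refl => //; apply: IH.
Qed.

Lemma in_W_gen_tr S u : in_W_gen S u -> in_W_gen S u^T.
Proof. by case=> s [hs ->]; exists (rev s); rewrite tr_refl_prod all_rev. Qed.

End Reflections.

Definition longest_in (R : realFieldType) (n : nat) (D DL : seq 'cV[R]_n)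
    (w : 'M[R]_n) : Prop :=
  exists k, length_is D w k /\
    forall u k', in_W_gen DL u -> length_is D u k' -> (k' <= k)%N.

Section RootSystem.
Variables (R : realFieldType) (n : nat) (Phi Delta : seq 'cV[R]_n).
Hypotheses (hPhi : root_system Phi) (hDelta : simple_roots Phi Delta).
Local Notation pos := (pos_wrt Phi Delta).
Implicit Types (a b x : 'cV[R]_n) (u w : 'M[R]_n) (s : seq 'cV[R]_n).

Let simple_root : {subset Delta <= Phi}.
Proof. by case: hDelta. Qed.

Lemma root_dot_neq0 a : a \in Phi -> dot a a != 0.
Proof.
case: hPhi => h0 _ _ _ ha; apply/eqP => /dotxx_eq0 ha0.
by move: ha h0; rewrite ha0 => ->.
Qed.

Lemma lincomb_inj f g :
  lincomb Delta f = lincomb Delta g -> forall d, d \in Delta -> f d = g d.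
Proof.
case: hDelta => _ _ hind _ hfg d hd; apply/eqP; rewrite -subr_eq0; apply/eqP.
apply: (hind (fun d => f d - g d)) => //.
by rewrite -/(lincomb _ (fun d => f d + - g d)) lincombD lincombN hfg subrr.
Qed.

Lemma cone_pointed x : cone Delta x -> cone Delta (- x) -> x = 0.
Proof.
move=> [f hx hf] [g hx' hg].
have hfg : lincomb Delta (fun d => f d + g d) = lincomb Delta (fun _ => 0).
  by rewrite lincombD -hx -hx' subrr lincomb_eq0.
rewrite hx; apply: lincomb_eq0 => d hd.
by have /eqP := lincomb_inj hfg hd; rewrite paddr_eq0 ?hf ?hg // => /andP[/eqP].
Qed.

Lemma pos_cone b : pos b -> cone Delta b.
Proof. by case=> _ [c ->]; exists (fun d => (c d)%:R) => // d _; rewrite ler0n. Qed.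

Lemma pos_root_cone_opp b : pos b -> cone Delta (- b) -> False.
Proof.
move=> hb hnb; have hb0 := cone_pointed (pos_cone hb) hnb.
by case: hPhi hb => h0 _ _ _ [+ _]; rewrite hb0 (negPf h0).
Qed.

Lemma pos_neg_root b : pos b -> pos (- b) -> False.
Proof. by move=> hb /pos_cone; apply: pos_root_cone_opp. Qed.

Lemma simple_pos a : a \in Delta -> pos a.
Proof.
case: hDelta => hu hs _ _ ha; split; first exact: hs.
exists (fun d => nat_of_bool (d == a)).
by rewrite -{1}(lincomb_delta hu ha); apply: eq_bigr => d _; case: (d == a).
Qed.

(* Coefficients of [b] and of [- s_a b] are nonnegative and add up to a multiple
   of [a]; so [b] would be a multiple of [a], which reducedness excludes. *)
Lemma refl_simple_pos a b : a \in Delta -> pos b -> b != a -> pos (refl_mx a *m b).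
Proof.
move=> ha hb hba; case: hDelta => hu hs _ hdich; case: hPhi => _ hrefl _ hred.
have hr : refl_mx a *m b \in Phi by apply: hrefl; [apply: hs | case: hb].
case: (hdich _ hr) => // - [_ [c' hc']]; exfalso.
case: hb => hbP [c hc]; set k := 2 / dot a a * dot a b.
have hsum : lincomb Delta (fun d => (c d)%:R + (c' d)%:R)
          = lincomb Delta (fun d => k * (d == a)%:R).
  rewrite lincombD lincombZ lincomb_delta // -[lincomb _ _]/(\sum_(d <- _) _ *: _).
  by rewrite -hc -[lincomb _ _]/(\sum_(d <- _) _ *: _) -hc' refl_mxE opprB addrC subrK.
have hz d : d \in Delta -> d != a -> c d = 0%N.
  move=> hd hda; have := lincomb_inj hsum hd; rewrite (negPf hda) mulr0 => /eqP.
  by rewrite -natrD pnatr_eq0 addn_eq0 => /andP[/eqP].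
have hb' : b = (c a)%:R *: a.
  rewrite -{2}(lincomb_delta hu ha) -lincombZ hc; apply: eq_lincomb => d hd.
  by case: (eqVneq d a) => [->|hda]; rewrite ?mulr1 // hz ?mulr0.
have : (c a)%:R *: a \in Phi by rewrite -hb'.
case/(hred _ _ (hs _ ha)) => hca; first by move: hba; rewrite hb' hca scale1r eqxx.
by move: (ler0n R (c a)); rewrite hca ler0N1.
Qed.

Lemma W_gen_root S w b : {subset S <= Phi} -> in_W_gen S w -> b \in Phi -> w *m b \in Phi.
Proof.
case: hPhi => _ hr _ _ hS [s [+ ->]]; elim: s => [|a s IH] /=; first by rewrite mul1mx.
by case/andP => ha hs hb; rewrite -mulmxA; apply: hr (hS _ ha) _; apply: IH.
Qed.

Lemma W_gen_orthogonal S w : {subset S <= Phi} -> in_W_gen S w -> w^T *m w = 1%:M.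
Proof.
move=> hS [s [hs ->]]; apply: refl_prod_orthogonal => a ha.
by apply/root_dot_neq0/hS; move/allP: hs => /(_ a ha).
Qed.

Lemma exchange_condition s b : all (mem Delta) s -> pos b ->
  pos (- (refl_prod s *m b)) ->
  exists t, [/\ size s = (size t).+1, all (mem Delta) t &
                refl_prod s *m refl_mx b = refl_prod t].
Proof.
case: hDelta => _ _ _ hdich.
elim: s => [|a s IH] /=; first by rewrite mul1mx => _ hb /(pos_neg_root hb).
case/andP => ha hall hb hn.
have hsb : refl_prod s *m b \in Phi.
  by apply: (W_gen_root simple_root); [exists s | case: hb].
have hso : (refl_prod s)^T *m refl_prod s = 1%:M.
  by apply: (W_gen_orthogonal simple_root); exists s.
case: (hdich _ hsb) => hc; last first.
  have [t [ht1 ht2 ht3]] := IH hall hb hc.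
  by exists (a :: t); split => //=; rewrite ?ht1 ?ha // -mulmxA ht3.
have [hsba|hsba] := eqVneq (refl_prod s *m b) a; last first.
  by move: hn; rewrite -mulmxA => /(pos_neg_root (refl_simple_pos ha hc hsba)).
exists s; split => //.
rewrite -hsba refl_mx_conj // -!mulmxA (mulmxA _ (refl_prod s)) hso mul1mx.
by rewrite refl_mxK ?mulmx1 // root_dot_neq0 //; case: hb.
Qed.

Section Levi.
Variable DL : seq 'cV[R]_n.
Hypothesis hDL : {subset DL <= Delta}.

Let hDLP : {subset DL <= Phi}.
Proof. by move=> d /hDL /simple_root. Qed.

Lemma W_gen_pos_nonspanned w b :
  in_W_gen DL w -> pos b -> ~ spanned_by Delta DL b ->
  pos (w *m b) /\ ~ spanned_by Delta DL (w *m b).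
Proof.
case: hDelta => hu _ _ _ [s [+ ->]]; elim: s => [|a s IH] /=; first by rewrite mul1mx.
case/andP => ha hall hb hnb; have [hp hnp] := IH hall hb hnb.
rewrite -mulmxA; split.
  apply: refl_simple_pos => //; first exact: hDL.
  by apply/eqP => he; apply: hnp; rewrite he; apply: spanned_by_mem.
move=> /(spanned_by_refl hu hDL ha); rewrite mulmxA refl_mxK ?mul1mx //.
exact/root_dot_neq0/hDLP.
Qed.

Lemma longest_simple_neg w d : in_W_gen DL w -> longest_in Delta DL w ->
  d \in DL -> pos (- (w *m d)).
Proof.
move=> [s [hsL ->]] [k [[[sw [hsw1 hsw2 hsw3]] hmin] hmax]] hd.
case: hDelta => _ hs _ hdich; have hdP := hDLP hd.
have hwd : refl_prod s *m d \in Phi by apply: (W_gen_root hDLP) => //; exists s.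
case: (hdich _ hwd) => // hpos; exfalso.
set u := refl_prod s *m refl_mx d.
have huL : in_W_gen DL u.
  by exists (rcons s d); rewrite refl_prod_rcons all_rcons; split => //; apply/andP.
have hwu : has_word Delta u k.+1.
  exists (rcons sw d); rewrite size_rcons hsw1 all_rcons refl_prod_rcons /u hsw3.
  by split => //; apply/andP; split => //; apply: hDL.
have [k' hk'] := has_word_length hwu.
have hk'le := hmax _ _ huL hk'.
case: hk' => [[t [ht1 ht2 ht3]] _].
have hn : pos (- (refl_prod t *m d)).
  by rewrite -ht3 /u -mulmxA refl_mx_self ?root_dot_neq0 // mulmxN opprK.
have [t' [ht'1 ht'2]] := exchange_condition ht2 (simple_pos (hDL hd)) hn.
rewrite -ht3 /u -mulmxA refl_mxK ?root_dot_neq0 // mulmx1 => hst'.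
apply: (hmin (size t')); last by exists t'.
by rewrite -ltnS -ht'1 ht1.
Qed.

Lemma longest_spanned_neg w b : in_W_gen DL w -> longest_in Delta DL w ->
  pos b -> spanned_by Delta DL b -> cone Delta (- (w *m b)).
Proof.
move=> hwL hlong [_ [c hc]] [f hf hf0].
have hcf d : d \in Delta -> d \notin DL -> c d = 0%N.
  move=> hd hdL; have hcf : lincomb Delta (fun d => (c d)%:R) = lincomb Delta f.
    by rewrite -hf hc.
  by have := lincomb_inj hcf hd; rewrite hf0 // => /eqP; rewrite pnatr_eq0 => /eqP.
rewrite hc mulmx_sumr -sumrN big_seq.
apply: (big_ind (cone Delta)); [exact: cone0 | exact: coneD |].
move=> d hd; rewrite -scalemxAr -scalerN.
have [hdL|hdL] := boolP (d \in DL); last by rewrite hcf // scale0r; apply: cone0.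
by apply: coneZ; [apply: ler0n | apply: pos_cone; apply: longest_simple_neg].
Qed.

End Levi.

Lemma length_additive_inversions u w p q b c :
  length_is Delta u p -> length_is Delta w q -> length_is Delta (u *m w) (p + q) ->
  pos b -> pos (- (u *m b)) -> pos c -> w *m c = - b -> False.
Proof.
move=> [[su [hsu1 hsu2 hu]] _] [[sw [hsw1 hsw2 hw]] _] [_ hmin] hb hub hc hwc.
have hwo : w^T *m w = 1%:M by apply: (W_gen_orthogonal simple_root); exists sw.
rewrite hu in hub; have [tu [htu1 htu2 htu3]] := exchange_condition hsu2 hb hub.
have hwc' : pos (- (refl_prod sw *m c)) by rewrite -hw hwc opprK.
have [tw [htw1 htw2 htw3]] := exchange_condition hsw2 hc hwc'.
have hconj : refl_mx b *m w = w *m refl_mx c.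
  by rewrite -refl_mxN -hwc refl_mx_conj // -!mulmxA hwo mulmx1.
have hbb : refl_mx b *m refl_mx b = 1%:M by rewrite refl_mxK ?root_dot_neq0 //; case: hb.
apply: (hmin (size (tu ++ tw))).
  by rewrite size_cat -hsu1 -hsw1 htu1 htw1 addSn addnS ltnS ltnW.
exists (tu ++ tw); rewrite size_cat all_cat htu2 htw2 refl_prod_cat -htu3 -htw3.
by rewrite -hu -hw -hconj -!mulmxA (mulmxA (refl_mx b)) hbb mul1mx.
Qed.

Lemma reduced_product_nonspanned DL u w p q b :
  {subset DL <= Delta} -> in_W_gen DL w -> longest_in Delta DL w ->
  length_is Delta u p -> length_is Delta w q -> length_is Delta (u *m w) (p + q) ->
  pos b -> pos (- (u *m b)) -> ~ spanned_by Delta DL b.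
Proof.
move=> hDL hwL hlong hup hwq huwpq hb hub hspan.
have hDLP : {subset DL <= Phi} by move=> d /hDL /simple_root.
have hwo := W_gen_orthogonal hDLP hwL.
have hwo' : w *m w^T = 1%:M by apply: mulmx1C.
have hwTL := in_W_gen_tr hwL.
have hwb : w *m (w^T *m b) = b by rewrite mulmxA hwo' mul1mx.
have hgP : w^T *m b \in Phi by apply: (W_gen_root hDLP hwTL); case: hb.
case: hDelta => hu _ _ hdich; case: (hdich _ hgP) => hg.
  apply: (pos_root_cone_opp hb); rewrite -hwb.
  by apply: (longest_spanned_neg hDL) => //; apply: (spanned_by_W_gen hu).
by apply: (length_additive_inversions hup hwq huwpq hb hub hg); rewrite mulmxN hwb.
Qed.

End RootSystem.

Theorem mainTheorem1 (R : realFieldType) (n : nat)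
  (Phi Delta : seq 'cV[R]_n)
  (hPhi : root_system Phi) (hDelta : simple_roots Phi Delta)
  (* S in h, non-regular, with M = Z_G(S) the standard Levi with simple roots DM *)
  (s1 s2 : 'rV[R]_n) (DM : seq 'cV[R]_n)
  (hSnonreg : exists a, a \in Phi /\ vanishes_at s1 s2 a)
  (hDM : {subset DM <= Delta})
  (hM : forall a, a \in Phi ->
          (vanishes_at s1 s2 a <-> pos_wrt Phi DM a \/ pos_wrt Phi DM (- a)))
  (* v in ^M W *)
  (v : 'M[R]_n) (hvW : in_W Phi v)
  (hvM : forall g, in_N Phi Delta (invmx v) g -> ~ pos_wrt Phi DM g)
  (* Delta_L = R(v) = N(v) cap Delta *)
  (DL : seq 'cV[R]_n)
  (hDL : forall a, a \in DL <-> a \in Delta /\ in_N Phi Delta v a)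
  (* w_v = longest element of W_L *)
  (wv : 'M[R]_n) (hwvL : in_W_gen DL wv)
  (hwvlong : exists k, length_is Delta wv k /\
      forall u k', in_W_gen DL u -> length_is Delta u k' -> (k' <= k)%N)
  (* v = x_v w_v with x_v in W^L and l(v) = l(x_v) + l(w_v) *)
  (xv : 'M[R]_n) (hxW : in_W Phi xv)
  (hxL : forall g, in_N Phi Delta xv g -> ~ pos_wrt Phi DL g)
  (hdec : v = xv *m wv)
  (hlen : exists a b, [/\ length_is Delta xv a, length_is Delta wv b
                        & length_is Delta v (a + b)])
  (g : 'cV[R]_n) (hg : in_N Phi Delta (invmx xv) g) :
  neg_root Phi Delta (invmx v *m g) /\ ~ (- (invmx v *m g) \in Delta).
Proof.
have hDLD : {subset DL <= Delta} by move=> d /hDL [].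
have hDLP : {subset DL <= Phi} by case: hDelta => _ hs _ _ d /hDLD /hs.
have hxo := W_gen_orthogonal hPhi (fun _ h => h) hxW.
have hwo := W_gen_orthogonal hPhi hDLP hwvL.
have hvo : v^T *m v = 1%:M by rewrite hdec trmx_mul mulmxA -(mulmxA _ xv^T) hxo mulmx1.
rewrite !invmx_orthogonal // in hg *; case: hg => hgpos hbeta.
set beta := - (xv^T *m g) in hbeta.
have hxbeta : xv *m beta = - g by rewrite mulmxN mulmxA (mulmx1C hxo) mul1mx.
have [p [q [hxp hwq hvpq]]] := hlen; rewrite hdec in hvpq.
have hnspan : ~ spanned_by Delta DL beta.
  by apply: (reduced_product_nonspanned hPhi hDelta hDLD hwvL hwvlong hxp hwq hvpq hbeta);
    rewrite hxbeta opprK.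
have [hpos hnspan'] := W_gen_pos_nonspanned hPhi hDelta hDLD (in_W_gen_tr hwvL) hbeta hnspan.
have hvg : v^T *m g = - (wv^T *m beta) by rewrite /beta mulmxN opprK hdec trmx_mul mulmxA.
rewrite hvg /neg_root opprK; split=> // hsimple; apply: hnspan'.
apply: spanned_by_mem => //; first by case: hDelta.
apply/hDL; split=> //; split=> //.
by rewrite /neg_root hdec -mulmxA (mulmxA wv) (mulmx1C hwo) mul1mx hxbeta opprK.
Qed.
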